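(* Let $g$ be a nondegenerate symmetric bilinear form on $\mathbb{R}^n$, let $A$ be a $g$-symmetric endomorphism of $\mathbb{R}^n$ and let $\lambda$ be a real eigenvalue of $A$. Then $\big|\sigma\big(g|_{\mathrm{Ker}(A-\lambda)^n}\big)\big|\le\dim\mathrm{Ker}(A-\lambda)$. Moreover, the restriction of $g$ to the eigenspace $\mathrm{Ker}(A-\lambda)$ is nondegenerate if and only if the algebraic multiplicity $\dim\mathrm{Ker}(A-\lambda)^n$ and the geometric multiplicity $\dim\mathrm{Ker}(A-\lambda)$ of $\lambda$ coincide.
   Context: $g$ is not assumed positive definite; $A$ is $g$-symmetric if $g(Av,w)=g(v,Aw)$ for all $v,w$. For a subspace $W$, $g|_W$ is the restriction of $g$ to $W\times W$, and $\sigma$ of a symmetric bilinear form is its number of positive squares minus its number of negative squares. *)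

(* Conventions: vectors of R^n are row vectors 'rV[R]_n,
   an endomorphism A : 'M_n acts by v |-> v *m A, and the bilinear form with
   Gram matrix G is g(v,w) = v *m G *m w^T. *)
From HB Require Import structures.
From mathcomp Require Import all_boot all_order all_algebra.
From mathcomp Require Import reals.
Set Implicit Arguments. Unset Strict Implicit. Unset Printing Implicit Defensive.
Import Order.TTheory GRing.Theory Num.Theory.
Local Open Scope ring_scope.

Section Defs.
Variables (R : realType) (n : nat).

Definition bform (G : 'M[R]_n) (v w : 'rV[R]_n) : R := (v *m G *m w^T) 0 0.

Definition nondeg_sym_form (G : 'M[R]_n) : Prop :=
  G^T = G /\ G \in unitmx.

Definition g_symmetric (G A : 'M[R]_n) : Prop :=
  forall v w : 'rV[R]_n, bform G (v *m A) w = bform G v (w *m A).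

Definition nondeg_on (G : 'M[R]_n) (m : nat) (W : 'M[R]_(m, n)) : Prop :=
  forall v : 'rV[R]_n, (v <= W)%MS ->
    (forall w : 'rV[R]_n, (w <= W)%MS -> bform G v w = 0) -> v = 0.

Definition diag_basis (G : 'M[R]_n) (m : nat) (W : 'M[R]_(m, n))
    (k : nat) (B : 'M[R]_(k, n)) : Prop :=
  [/\ row_free B, (B == W)%MS & is_diag_mx (B *m G *m B^T)].

Definition sig_in_basis (G : 'M[R]_n) (k : nat) (B : 'M[R]_(k, n)) : int :=
  let D := B *m G *m B^T in
  (#|[set i : 'I_k | 0 < D i i]|%:Z - #|[set i : 'I_k | D i i < 0]|%:Z)%R.

Definition eigsp (A : 'M[R]_n) (l : R) : 'M[R]_n := kermx (A - l%:M).
Definition geneigsp (A : 'M[R]_n) (l : R) : 'M[R]_n := kermx ((A - l%:M) ^+ n).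

End Defs.

From HB Require Import structures.
From mathcomp Require Import all_boot all_order all_algebra.
From mathcomp Require Import reals.
From mathcomp Require Import zify.
Set Implicit Arguments. Unset Strict Implicit. Unset Printing Implicit Defensive.
Import Order.TTheory GRing.Theory Num.Theory.
Local Open Scope ring_scope.

(* N := A - l is g-self-adjoint.  The Fitting decomposition
   R^n = Ker N^n (+) Im N^n is g-orthogonal, so g is nondegenerate on
   W := Ker N^n.  The subspace L := sum_h (Ker N^h :&: Im N^h) of W is totally
   isotropic, and concavity of j |-> dim Ker N^j gives
   dim W <= 2 dim L + dim Ker N.  A definite subspace meets L trivially, so the
   numbers of positive and of negative squares are both at most dim W - dim L,
   whence |sigma| <= dim W - 2 dim L <= dim Ker N.  If g is nondegenerate on
   Ker N then Ker N^2 = Ker N (for x in Ker N^2, x N lies in Ker N and is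
   orthogonal to it), so the kernel chain is constant; conversely, equal
   dimensions force Ker N = W. *)

Section KernelPowers.
Variables (F : fieldType) (n : nat) (N : 'M[F]_n).

Definition kerpow j : 'M[F]_n := kermx (N ^+ j).
Local Notation a j := (\rank (kerpow j)).

Lemma mulmx_exprD i j : N ^+ (i + j) = N ^+ i *m N ^+ j.
Proof. by rewrite exprD mulmxE. Qed.

Lemma kerpowS i j : (i <= j)%N -> (kerpow i <= kerpow j)%MS.
Proof.
move=> le_ij; apply/sub_kermxP; rewrite -(subnKC le_ij) mulmx_exprD mulmxA.
by rewrite mulmx_ker mul0mx.
Qed.

Lemma kerpow_mulX j h : (kerpow (j + h) *m N ^+ h :=: kerpow j :&: N ^+ h)%MS.
Proof.
apply/eqmxP; rewrite sub_capmx submxMl andbT; apply/andP; split.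
  by apply/sub_kermxP; rewrite -mulmxA -mulmx_exprD addnC mulmx_ker.
have /submxP[D defD] := capmxSr (kerpow j) (N ^+ h).
rewrite defD submxMr //; apply/sub_kermxP.
by rewrite addnC mulmx_exprD mulmxA -defD; apply/sub_kermxP; apply: capmxSl.
Qed.

Lemma mxrank_kerpow_cap j h : (\rank (kerpow j :&: N ^+ h) + a h = a (j + h))%N.
Proof.
rewrite -(kerpow_mulX j h) -(mxrank_mul_ker (kerpow (j + h)) (N ^+ h)).
by have /capmx_idPr -> := kerpowS (leq_addl j h).
Qed.

(* a (i.+1) - a i = \rank (kerpow 1 :&: N ^+ i), which decreases with i. *)
Lemma mxrank_kerpow_concave i : (a i.+2 + a i <= 2 * a i.+1)%N.
Proof.
have := mxrank_kerpow_cap 1 i.+1; have := mxrank_kerpow_cap 1 i.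
have : (\rank (kerpow 1 :&: N ^+ i.+1) <= \rank (kerpow 1 :&: N ^+ i))%N.
  by apply/mxrankS/capmxS; rewrite // exprS -mulmxE submxMl.
rewrite !add1n; lia.
Qed.

Lemma mxrank_kerpow_step_noninc i j :
  (i <= j)%N -> (a j.+1 - a j <= a i.+1 - a i)%N.
Proof.
move=> /subnKC <-; elim: (j - i)%N => [|k IH]; first by rewrite addn0.
have := mxrank_kerpow_concave (i + k).
have := mxrankS (kerpowS (leqnSn (i + k))).
have := mxrankS (kerpowS (leqnSn (i + k).+1)).
rewrite !addnS in IH *; lia.
Qed.

Lemma mxrank_kerpow_const i j : a i.+1 = a i -> (i <= j)%N -> a j = a i.
Proof.
move=> ai_eq /subnKC <-; elim: (j - i)%N => [|k IH]; first by rewrite addn0.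
have := mxrank_kerpow_step_noninc (leq_addr k i).
have := mxrankS (kerpowS (leqnSn (i + k))).
rewrite addnS; lia.
Qed.

Lemma mxrank_kerpow_stable j : (n <= j)%N -> a j = a n.
Proof.
apply: mxrank_kerpow_const; apply/eqP; rewrite eqn_leq.
rewrite [(a n <= _)%N]mxrankS ?kerpowS // andbT leqNgt; apply/negP => lt_an.
have lower i : (i <= n.+1)%N -> (i <= a i)%N.
  elim: i => [//|i IH] le_in.
  have := mxrank_kerpow_step_noninc (ltnSE le_in); have := IH (ltnW le_in).
  have := mxrankS (kerpowS (leqnSn i)); lia.
by have := lower _ (leqnn n.+1); have := rank_leq_row (kerpow n.+1); lia.
Qed.

Lemma kerpow_sub_stable j : (kerpow j <= kerpow n)%MS.
Proof.
have le_nj : (n <= j + n)%N := leq_addl j n.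
have /eqmxP eq_n : (kerpow n == kerpow (j + n))%MS.
  by have [_ <-] := mxrank_leqif_eq (kerpowS le_nj); rewrite mxrank_kerpow_stable.
by rewrite eq_n kerpowS ?leq_addr.
Qed.

Lemma kerpow_cap_im : (kerpow n :&: N ^+ n)%MS = 0.
Proof.
apply/eqP; rewrite -mxrank_eq0.
by have := mxrank_kerpow_cap n n; rewrite mxrank_kerpow_stable ?leq_addr //; lia.
Qed.

Lemma kerpow_add_im : (1%:M <= kerpow n + N ^+ n)%MS.
Proof.
rewrite -mxrank_leqif_sup ?submx1 //.
have := mxrank_sum_cap (kerpow n) (N ^+ n).
rewrite kerpow_cap_im mxrank0 addn0 mxrank_ker mxrank1 => ->.
by rewrite subnK ?rank_leq_col.
Qed.

Definition isoblock h : 'M[F]_n := (kerpow h :&: N ^+ h)%MS.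
Definition isosum m : 'M[F]_n := (\sum_(h < m) isoblock h)%MS.

Lemma isosum_sub m : (isosum m.+1 <= kerpow m)%MS.
Proof.
apply/sumsmx_subP => h _; apply: submx_trans (capmxSl _ _) _.
by apply: kerpowS; rewrite -ltnS.
Qed.

(* isoblock m.+1 has rank a (2m+2) - a (m+1) and meets isosum m.+1 inside
   kerpow m :&: N ^+ m.+1, of rank a (2m+1) - a (m+1); concavity closes the
   induction. *)
Lemma mxrank_isosum m : (a (m + m).+1 <= 2 * \rank (isosum m.+1) + a 1)%N.
Proof.
elim: m => [|m IH]; first by rewrite leq_addl.
rewrite /isosum big_ord_recr /= -/(isosum m.+1).
set S := isosum m.+1 in IH *.
have le_cap : (\rank (S :&: isoblock m.+1) <= \rank (kerpow m :&: N ^+ m.+1))%N.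
  by apply/mxrankS/capmxS; [apply: isosum_sub | apply: capmxSr].
have := mxrank_sum_cap S (isoblock m.+1); have := mxrank_kerpow_cap m.+1 m.+1.
have := mxrank_kerpow_cap m m.+1; have := mxrank_kerpow_concave (m + m).+1.
rewrite /isoblock in le_cap *; rewrite !addSn !addnS; lia.
Qed.

End KernelPowers.

Lemma quad_pos_diag_eq0 (R : realFieldType) p (D : 'M[R]_p) (c : 'rV[R]_p) :
  (forall i j, i != j -> D i j = 0) -> (forall i, 0 < D i i) ->
  (c *m D *m c^T) 0 0 = 0 -> c = 0.
Proof.
move=> D_diag D_pos.
have -> : (c *m D *m c^T) 0 0 = \sum_j D j j * c 0 j ^+ 2.
  rewrite mxE; apply: eq_bigr => j _; rewrite mxE (bigD1 j) //= big1.
    by rewrite addr0 !mxE mulrAC mulrC expr2.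
  by move=> i ij; rewrite D_diag ?mulr0.
have term_ge0 i : 0 <= D i i * c 0 i ^+ 2 by rewrite mulr_ge0 ?sqr_ge0 ?ltW.
move=> /(psumr_eq0P (fun i _ => term_ge0 i)) c0; apply/rowP => j.
by have /eqP := c0 j isT; rewrite mulf_eq0 sqrf_eq0 gt_eqF //= mxE => /eqP.
Qed.

Section BilinearForm.
Variables (R : realType) (n : nat) (G : 'M[R]_n).

Definition isotropic m (L : 'M[R]_(m, n)) : Prop :=
  forall x y : 'rV[R]_n, (x <= L)%MS -> (y <= L)%MS -> bform G x y = 0.

Definition anisotropic p (P : 'M[R]_(p, n)) : Prop :=
  forall c : 'rV[R]_p, bform G (c *m P) (c *m P) = 0 -> c = 0.

Lemma bformDr (x y z : 'rV[R]_n) : bform G x (y + z) = bform G x y + bform G x z.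
Proof. by rewrite /bform linearD /= mulmxDr mxE. Qed.

Lemma bform_delta (x : 'rV[R]_n) j : bform G x (delta_mx 0 j) = (x *m G) 0 j.
Proof. by rewrite /bform trmx_delta -colE mxE. Qed.

Lemma bform_row (x : 'rV[R]_n) k (B : 'M[R]_(k, n)) (c : 'rV[R]_k) :
  bform G x (c *m B) = (x *m G *m B^T *m c^T) 0 0.
Proof. by rewrite /bform trmx_mul mulmxA. Qed.

Lemma nondeg_on_compl m1 m2 (W : 'M[R]_(m1, n)) (U : 'M[R]_(m2, n)) :
  G \in unitmx -> (1%:M <= W + U)%MS ->
  (forall w u, (w <= W)%MS -> (u <= U)%MS -> bform G w u = 0) ->
  nondeg_on G W.
Proof.
move=> G_unit WU_full WU_orth x xW x_orthW.
have x_orth y : bform G x y = 0.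
  have /sub_addsmxP[[c d] /= ->] := submx_trans (submx1 y) WU_full.
  by rewrite bformDr x_orthW ?submxMl // WU_orth ?submxMl // addr0.
have xG0 : x *m G = 0 by apply/rowP => j; rewrite -bform_delta x_orth mxE.
by rewrite -(mulmxK G_unit x) xG0 mul0mx.
Qed.

Lemma anisotropic_row_free p (P : 'M[R]_(p, n)) : anisotropic P -> row_free P.
Proof.
move=> P_aniso; rewrite -kermx_eq0; apply/eqP/row_matrixP => i.
rewrite row0; apply: P_aniso.
by rewrite -row_mul mulmx_ker row0 /bform !mul0mx mxE.
Qed.

Lemma mxrank_anisotropic_isotropic m p l (W : 'M[R]_(m, n))
    (P : 'M[R]_(p, n)) (L : 'M[R]_(l, n)) :
  anisotropic P -> isotropic L -> (P <= W)%MS -> (L <= W)%MS ->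
  (p + \rank L <= \rank W)%N.
Proof.
move=> P_aniso L_iso PW LW.
have PL0 : (P :&: L)%MS = 0.
  apply/row_matrixP => i; rewrite row0.
  have /submxP[c xP] := submx_trans (row_sub i _) (capmxSl P L).
  have xL := submx_trans (row_sub i _) (capmxSr P L).
  by have := L_iso _ _ xL xL; rewrite xP => /P_aniso ->; rewrite mul0mx.
have := mxrank_sum_cap P L; rewrite PL0 mxrank0 addn0.
rewrite (eqnP (anisotropic_row_free P_aniso)) => <-.
by apply: mxrankS; rewrite addsmx_sub PW.
Qed.

Lemma anisotropic_pos_diag k p (B : 'M[R]_(k, n)) (f : 'I_p -> 'I_k) :
  injective f -> is_diag_mx (B *m G *m B^T) ->
  (forall i, 0 < (B *m G *m B^T) (f i) (f i)) -> anisotropic (rowsub f B).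
Proof.
move=> f_inj /is_diag_mxP B_diag B_pos c.
have PGP : rowsub f B *m G *m (rowsub f B)^T = mxsub f f (B *m G *m B^T).
  rewrite trmx_mxsub !mul_rowsub_mx mulmx_colsub.
  by apply/matrixP => i j; rewrite !mxE.
rewrite bform_row -(mulmxA c) -(mulmxA c) PGP.
apply: quad_pos_diag_eq0 => [i j ij|i]; rewrite mxE ?B_pos //.
by rewrite B_diag // (inj_eq val_inj) (inj_eq f_inj).
Qed.

Lemma card_pos_diag_isotropic m k l (W : 'M[R]_(m, n)) (B : 'M[R]_(k, n))
    (L : 'M[R]_(l, n)) :
  (B <= W)%MS -> (L <= W)%MS -> is_diag_mx (B *m G *m B^T) -> isotropic L ->
  (#|[set i | (0 < (B *m G *m B^T) i i)%R]| + \rank L <= \rank W)%N.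
Proof.
move=> BW LW B_diag L_iso; set S := [set i | _].
apply: (mxrank_anisotropic_isotropic (P := rowsub (@enum_val _ (mem S)) B)) => //.
  apply: anisotropic_pos_diag B_diag _ => [|i]; first exact: enum_val_inj.
  by have := enum_valP i; rewrite inE.
exact: submx_trans (rowsub_sub _ _) BW.
Qed.

Lemma diag_basis_neq0 m k (W : 'M[R]_(m, n)) (B : 'M[R]_(k, n)) i :
  nondeg_on G W -> diag_basis G W B -> (B *m G *m B^T) i i != 0.
Proof.
move=> W_nondeg [B_free /andP[BW WB] /is_diag_mxP B_diag]; apply/eqP => Dii0.
have rowD0 : row i (B *m G *m B^T) = 0.
  by apply/rowP => j; rewrite [LHS]mxE [RHS]mxE; case: (eqVneq i j) => [<- | /B_diag].
have orthW w : (w <= W)%MS -> bform G (row i B) w = 0.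
  move=> /submx_trans/(_ WB)/submxP[c ->].
  by rewrite bform_row -2!row_mul rowD0 mul0mx mxE.
have /eqP := W_nondeg _ (submx_trans (row_sub i B) BW) orthW.
rewrite rowE mulmx_free_eq0 // => /eqP/matrixP/(_ 0 i).
by rewrite !mxE !eqxx => /eqP; rewrite oner_eq0.
Qed.

End BilinearForm.

Lemma sig_isotropic_bound (R : realType) n (G : 'M[R]_n) m k l
    (W : 'M[R]_(m, n)) (B : 'M[R]_(k, n)) (L : 'M[R]_(l, n)) :
  nondeg_on G W -> diag_basis G W B -> isotropic G L -> (L <= W)%MS ->
  `|sig_in_basis G B| <= (\rank W)%:Z - (2 * \rank L)%:Z.
Proof.
move=> W_nondeg B_basis L_iso LW.
have [/eqnP rankB BW_eq B_diag] := B_basis; have /andP[BW _] := BW_eq.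
set D := B *m G *m B^T.
have pos := card_pos_diag_isotropic BW LW B_diag L_iso.
have neg : (#|[set i | (D i i < 0)%R]| + \rank L <= \rank W)%N.
  have -> : [set i | D i i < 0] = [set i | 0 < (B *m - G *m B^T) i i].
    by apply/setP => i; rewrite !inE mulmxN mulNmx [in RHS]mxE oppr_gt0.
  apply: card_pos_diag_isotropic => //.
    rewrite mulmxN mulNmx; apply/is_diag_mxP => i j ij.
    by rewrite mxE (is_diag_mxP B_diag) ?oppr0.
  move=> x y xL yL.
  by rewrite /bform mulmxN mulNmx [LHS]mxE -/(bform G x y) L_iso ?oppr0.
have card_split : (#|[set i | (0 < D i i)%R]| + #|[set i | (D i i < 0)%R]| = k)%N.
  suff -> : [set i | (D i i < 0)%R] = ~: [set i | (0 < D i i)%R].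
    by rewrite cardsC card_ord.
  apply/setP => i; rewrite !inE ltNge le_eqVlt eq_sym.
  by rewrite (negPf (diag_basis_neq0 i W_nondeg B_basis)).
rewrite /sig_in_basis -/D; move: pos neg card_split.
rewrite -(eqmx_rank BW_eq) rankB; move: #|_| #|_| (\rank L) => p q r *.
by rewrite ler_norml; apply/andP; split; rewrite -subr_ge0; lia.
Qed.

Section SelfAdjoint.
Variables (R : realType) (n : nat) (G N : 'M[R]_n).
Hypothesis G_sym : G^T = G.
Hypothesis N_selfadj : N *m G = G *m N^T.

Lemma selfadj_exp j : N ^+ j *m G = G *m (N ^+ j)^T.
Proof.
elim: j => [|j IH]; first by rewrite expr0 -[1]/(1%:M) trmx1 mul1mx mulmx1.
rewrite exprS -mulmxE -mulmxA IH mulmxA N_selfadj -mulmxA -trmx_mul.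
by rewrite mulmxE -exprSr exprS.
Qed.

Lemma bform_mulX j (x y : 'rV[R]_n) :
  bform G (x *m N ^+ j) y = bform G x (y *m N ^+ j).
Proof. by rewrite /bform -[x *m _ *m G]mulmxA selfadj_exp trmx_mul !mulmxA. Qed.

Lemma isoblock_orth i j : isoblock N i *m G *m (isoblock N j)^T = 0.
Proof.
wlog le_ij : i j / (i <= j)%N.
  move=> wlog_ij; case: (leqP i j) => [/wlog_ij // | /ltnW/wlog_ij].
  by move=> /(congr1 trmx); rewrite !trmx_mul trmxK G_sym trmx0 mulmxA.
have /submxP[D ->] : (isoblock N j <= N ^+ j)%MS by apply: capmxSr.
rewrite trmx_mul mulmxA -[isoblock N i *m G *m _]mulmxA -selfadj_exp mulmxA.
have /sub_kermxP -> : (isoblock N i <= kerpow N j)%MS.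
  exact: submx_trans (capmxSl _ _) (kerpowS N le_ij).
by rewrite !mul0mx.
Qed.

Lemma isotropic_isosum m : isotropic G (isosum N m).
Proof.
move=> x y /sub_sumsmxP[u ->] /sub_sumsmxP[v ->].
rewrite /bform mulmx_suml mulmx_suml summxE big1 // => i _.
rewrite raddf_sum mulmx_sumr summxE big1 // => j _.
by rewrite /= trmx_mul -!mulmxA (mulmxA (isoblock N i)) (mulmxA (isoblock N i *m G))
  isoblock_orth mul0mx mulmx0 mxE.
Qed.

Lemma nondeg_on_kerpow : G \in unitmx -> nondeg_on G (kerpow N n).
Proof.
move=> G_unit; apply: nondeg_on_compl G_unit (kerpow_add_im N) _ => w u wK.
by move=> /submxP[c ->]; rewrite -bform_mulX (sub_kermxP wK) /bform !mul0mx mxE.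
Qed.

Lemma nondeg_kerpow1_sub : nondeg_on G (kerpow N 1) -> (kerpow N 2 <= kerpow N 1)%MS.
Proof.
move=> K1_nondeg; apply/row_subP => i; apply/sub_kermxP; rewrite -[N]expr1.
apply: K1_nondeg => [|w /sub_kermxP wK].
  by apply/sub_kermxP; rewrite -mulmxA -mulmx_exprD; apply/sub_kermxP/row_sub.
by rewrite bform_mulX wK /bform trmx0 mulmx0 mxE.
Qed.

End SelfAdjoint.

Lemma delta_mx_quad (R : ringType) n (M : 'M[R]_n) (i j : 'I_n) :
  ((delta_mx 0 i : 'rV_n) *m M *m (delta_mx 0 j : 'rV_n)^T) 0 0 = M i j.
Proof. by rewrite trmx_delta -rowE -colE [col _ _ _ _]mxE mxE. Qed.

Lemma g_symmetric_mx (R : realType) n (G A : 'M[R]_n) :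
  g_symmetric G A -> A *m G = G *m A^T.
Proof.
move=> A_sym; apply/matrixP => i j; have := A_sym (delta_mx 0 i) (delta_mx 0 j).
rewrite /bform trmx_mul !mulmxA -(mulmxA _ A G) -(mulmxA _ G A^T).
by rewrite !delta_mx_quad.
Qed.

Theorem corollary2p6 (R : realType) (n : nat) (G A : 'M[R]_n) (l : R) :
  nondeg_sym_form G -> g_symmetric G A -> eigenvalue A l ->
  (forall (k : nat) (B : 'M[R]_(k, n)), diag_basis G (geneigsp A l) B ->
     `|sig_in_basis G B| <= (\rank (eigsp A l))%:Z)
  /\
  (nondeg_on G (eigsp A l) <-> \rank (geneigsp A l) = \rank (eigsp A l)).
Proof.
move=> [G_sym G_unit] A_sym _; set N := A - l%:M.
have N_selfadj : N *m G = G *m N^T.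
  by rewrite mulmxBl linearB /= mulmxBr (g_symmetric_mx A_sym) tr_scalar_mx scalar_mxC.
have -> : eigsp A l = kerpow N 1 by rewrite /kerpow expr1.
have -> : geneigsp A l = kerpow N n by [].
have Kn_nondeg := nondeg_on_kerpow N_selfadj G_unit.
split; last split => [K1_nondeg | rank_eq].
- move=> k B B_basis.
  have := sig_isotropic_bound Kn_nondeg B_basis
    (isotropic_isosum G_sym N_selfadj (m := n.+1)) (isosum_sub N n).
  have := mxrank_isosum N n; rewrite (mxrank_kerpow_stable N (leqW (leq_addr n n))).
  by move=> isosum_big /le_trans; apply; lia.
- have K21 := nondeg_kerpow1_sub N_selfadj K1_nondeg.
  have a21 : \rank (kerpow N 2) = \rank (kerpow N 1).
    by apply/eqP; rewrite eqn_leq mxrankS //= mxrankS ?kerpowS.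
  by rewrite -(mxrank_kerpow_stable N (leqnSn n)) (mxrank_kerpow_const a21).
- have /eqmxP K1n : (kerpow N 1 == kerpow N n)%MS.
    by have [_ <-] := mxrank_leqif_eq (kerpow_sub_stable N 1); rewrite rank_eq.
  move=> v; rewrite K1n => vK v_orth; apply: Kn_nondeg vK _ => w wK.
  by apply: v_orth; rewrite K1n.
Qed.
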